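(* Let $1\leq i\leq n-2$ and $k=\lceil n/(n-i)\rceil$. There exist $i$-dimensional linear subspaces $H_1,\dots,H_k$ of $\mathbb{R}^n$ such that all of the following hold: (i) $H_1^\perp+\cdots+H_k^\perp=\mathbb{R}^n$, and $\{H_1^\perp,\dots,H_k^\perp\}$ cannot be partitioned into two nonempty mutually orthogonal subsets; (ii) if $E\subset S^{n-1}$ is nonempty, closed, and $S^{n-1}\cap(H_j^\perp+x)\subset E$ for all $j=1,\dots,k$ and $x\in E$, then $E=S^{n-1}$; (iii) if $F\subset\mathbb{R}^n$ is closed and invariant under every rotation fixing $H_j$, for each $j$, then $F$ is a union of spheres centered at the origin; (iv) if $K$ is a convex body rotationally symmetric with respect to each $H_j$, then $K$ is a ball centered at the origin.
   Context: $H^\perp$ is the orthogonal complement; $S^{n-1}$ the unit sphere. A rotation fixing $H$ is an element of $SO(n)$ acting as the identity on $H$. A set $X$ is rotationally symmetric with respect to an $i$-dimensional subspace $H$ if for every $x\in H$, $X\cap(H^\perp+x)$ is a union of $(n-i-1)$-dimensional spheres centered at $x$. Two families of subspaces are mutually orthogonal if every subspace of one is orthogonal to every subspace of the other. A convex body is a compact convex set with nonempty interior. *)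

From HB Require Import structures.
From mathcomp Require Import all_boot all_order all_algebra.
From mathcomp Require Import all_classical all_reals all_analysis.
Set Implicit Arguments. Unset Strict Implicit. Unset Printing Implicit Defensive.
Import Order.TTheory GRing.Theory Num.Theory.
Import numFieldNormedType.Exports.
Local Open Scope classical_set_scope.
Local Open Scope ring_scope.

(* Vectors of R^n are row vectors 'rV[R]_n; a linear subspace of R^n is the
   row space of a square matrix H : 'M[R]_n (membership: (x <= H)%MS),
   its dimension is \rank H. *)

Definition dotv (R : realType) (n : nat) (x y : 'rV[R]_n) : R := (x *m y^T) 0 0.
Definition enorm (R : realType) (n : nat) (x : 'rV[R]_n) : R := Num.sqrt (dotv x x).

(* Orthogonal complement H^perp: all u with u *m H^T = 0, i.e. u orthogonal
   to every row (hence every vector) of H. *)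
Definition orthc (R : realType) (n : nat) (H : 'M[R]_n) : 'M[R]_n := kermx H^T.

Definition orth_sub (R : realType) (n : nat) (A B : 'M[R]_n) : Prop :=
  forall x y : 'rV[R]_n, (x <= A)%MS -> (y <= B)%MS -> dotv x y = 0.

Definition sphere (R : realType) (n : nat) (c : 'rV[R]_n) (r : R) : set 'rV[R]_n :=
  [set x | enorm (x - c) = r].

Definition usphere (R : realType) (n : nat) : set 'rV[R]_n := sphere 0 1.

Definition rotation_fixing (R : realType) (n : nat) (H Q : 'M[R]_n) : Prop :=
  [/\ Q *m Q^T = 1%:M, \det Q = 1 &
      forall x : 'rV[R]_n, (x <= H)%MS -> x *m Q = x].

Definition union_of_origin_spheres (R : realType) (n : nat) (X : set 'rV[R]_n) : Prop :=
  exists Rd : set R, (forall r, Rd r -> 0 <= r) /\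
    X = \bigcup_(r in Rd) sphere 0 r.

Definition rot_symmetric (R : realType) (n : nat) (H : 'M[R]_n) (X : set 'rV[R]_n) : Prop :=
  forall x : 'rV[R]_n, (x <= H)%MS ->
    exists Rd : set R, (forall r, Rd r -> 0 <= r) /\
      X `&` [set y | (y - x <= orthc H)%MS] =
      \bigcup_(r in Rd) ([set y | (y - x <= orthc H)%MS] `&` sphere x r).

Definition convex_set_rV (R : realType) (n : nat) (K : set 'rV[R]_n) : Prop :=
  forall x y (t : R), 0 <= t -> t <= 1 -> K x -> K y -> K (t *: x + (1 - t) *: y).

Definition convex_body (R : realType) (n : nat) (K : set 'rV[R]_n) : Prop :=
  [/\ compact K, convex_set_rV K & K° !=set0].

Definition ceil_div (a b : nat) : nat := (a + b.-1) %/ b.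

From HB Require Import structures.
From mathcomp Require Import all_boot all_order all_algebra.
From mathcomp Require Import all_classical all_reals all_analysis.
From mathcomp Require Import zify ring lra.
Import Order.TTheory GRing.Theory Num.Theory.
Import numFieldNormedType.Exports.
Local Open Scope ring_scope.
Set Implicit Arguments. Unset Strict Implicit. Unset Printing Implicit Defensive.

(* Say that E is closed under moves in a subspace V when y is in E as soon as
   x is, |y| = |x| and y - x lies in V.  Under the hypotheses of (ii), (iii)
   and (iv) the set is closed under moves in every H_j^perp: for (iii) a move
   is a product of two reflections fixing H_j (this needs i <= n - 2), for (iv)
   it stays on a sphere of the slice (H_j^perp + c) centred at the projection c
   of x on H_j.  So everything reduces to showing that a set closed under moves
   in all the H_j^perp is a union of spheres centred at 0.  Moves in a coordinate
   subspace can push the whole mass of its coordinates onto any one of them, so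
   closedness for two coordinate subspaces sharing a coordinate gives closedness
   for the coordinate subspace of their union.  Moves in H_j^perp, which contains
   e_0 + e_b and e_c, combined with sign changes of e_0 (moves in H_0^perp),
   give every move in span(e_0, e_b, e_c); gluing these to the coordinate
   block of H_0^perp reaches the whole space. *)

(* Both triangular factorizations of the block matrix [[1, w], [u^T, 1]]. *)
Lemma det1Bmul (R : comUnitRingType) (n : nat) (u w : 'rV[R]_n) :
  \det (1%:M - u^T *m w) = 1 - (w *m u^T) 0 0.
Proof.
pose M := block_mx (1%:M : 'M[R]_1) w u^T 1%:M.
have lower : block_mx 1%:M 0 u^T 1%:M *m block_mx 1%:M w 0 (1%:M - u^T *m w) = M.
  by rewrite mulmx_block !(mul1mx, mulmx1, mul0mx, mulmx0, addr0, add0r) addrC subrK.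
have upper : block_mx (1%:M - w *m u^T) w 0 1%:M *m block_mx 1%:M 0 u^T 1%:M = M.
  by rewrite mulmx_block !(mul1mx, mulmx1, mul0mx, mulmx0, addr0, add0r) subrK.
move: (congr1 determinant lower) (congr1 determinant upper).
rewrite !det_mulmx !det_lblock !det_ublock !det1 !mul1r !mulr1 det_mx11 => -> <-.
by rewrite !mxE.
Qed.

Lemma mulmx_delta (R : pzRingType) (n p : nat) (v : 'rV[R]_n) (s : 'I_n) (t : 'I_p) :
  v *m delta_mx s t = v 0 s *: 'e_t.
Proof.
apply/rowP => c; rewrite !mxE (bigD1 s) //= !mxE !eqxx big1 ?addr0 // => r /negbTE rs.
by rewrite mxE rs andFb mulr0.
Qed.

Section DotProduct.
Variables (R : realType) (n : nat).
Implicit Types (x y z : 'rV[R]_n) (a : R).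

Lemma dotvE x y : dotv x y = \sum_c x 0 c * y 0 c.
Proof. by rewrite /dotv !mxE; apply: eq_bigr => c _; rewrite mxE. Qed.

Lemma dotvC x y : dotv x y = dotv y x.
Proof. by rewrite !dotvE; apply: eq_bigr => c _; rewrite mulrC. Qed.

Lemma dotvDl x y z : dotv (x + y) z = dotv x z + dotv y z.
Proof. by rewrite !dotvE -big_split; apply: eq_bigr => c _; rewrite !mxE mulrDl. Qed.

Lemma dotvNl x y : dotv (- x) y = - dotv x y.
Proof. by rewrite !dotvE -sumrN; apply: eq_bigr => c _; rewrite !mxE mulNr. Qed.

Lemma dotvZl a x y : dotv (a *: x) y = a * dotv x y.
Proof. by rewrite !dotvE mulr_sumr; apply: eq_bigr => c _; rewrite !mxE mulrA. Qed.

Lemma dotvBl x y z : dotv (x - y) z = dotv x z - dotv y z.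
Proof. by rewrite dotvDl dotvNl. Qed.

Lemma dotvDr x y z : dotv z (x + y) = dotv z x + dotv z y.
Proof. by rewrite ![dotv z _]dotvC dotvDl. Qed.

Lemma dotvBr x y z : dotv z (x - y) = dotv z x - dotv z y.
Proof. by rewrite ![dotv z _]dotvC dotvBl. Qed.

Lemma dotvZr a x y : dotv y (a *: x) = a * dotv y x.
Proof. by rewrite ![dotv y _]dotvC dotvZl. Qed.

Lemma dotv_delta x (s : 'I_n) : dotv x 'e_s = x 0 s.
Proof.
rewrite dotvE (bigD1 s) //= mxE !eqxx mulr1 big1 ?addr0 // => c /negbTE cs.
by rewrite mxE cs andbF mulr0.
Qed.

Lemma dotv_sqr x : dotv x x = \sum_c x 0 c ^+ 2.
Proof. by rewrite dotvE; apply: eq_bigr => c _; rewrite expr2. Qed.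

Lemma dotv_ge0 x : 0 <= dotv x x.
Proof. by rewrite dotv_sqr; apply: sumr_ge0 => c _; rewrite sqr_ge0. Qed.

Lemma dotv_eq0 x : (dotv x x == 0) = (x == 0).
Proof.
apply/idP/eqP => [|->]; last by rewrite dotv_sqr big1 // => c _; rewrite mxE expr0n.
rewrite dotv_sqr psumr_eq0 => [/allP x0|c _]; last exact: sqr_ge0.
apply/rowP => c; have /implyP := x0 c (mem_index_enum c).
by rewrite mxE sqrf_eq0 => /(_ isT) /eqP.
Qed.

Lemma dotvD_delta x a (s : 'I_n) : x 0 s = 0 ->
  dotv (x + a *: 'e_s) (x + a *: 'e_s) = dotv x x + a ^+ 2.
Proof.
move=> xs0; rewrite !dotvDl !dotvDr !dotvZl !dotvZr !dotv_delta xs0 [dotv 'e_s x]dotvC.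
by rewrite dotv_delta xs0 mxE !eqxx /=; ring.
Qed.

Lemma sqr_enorm x : enorm x ^+ 2 = dotv x x.
Proof. exact/sqr_sqrtr/dotv_ge0. Qed.

Lemma eq_enorm x y : (enorm x = enorm y) <-> (dotv x x = dotv y y).
Proof. by split => [e|e]; [rewrite -sqr_enorm e sqr_enorm | rewrite /enorm e]. Qed.

Lemma continuous_dotv : continuous (fun x => dotv x x).
Proof.
have -> : (fun x => dotv x x) = (fun x => \sum_(c <- index_enum 'I_n) x 0 c * x 0 c).
  by apply/funext => x; rewrite dotvE.
apply: continuous_big => [[x y]|c _]; first exact: add_continuous.
by move=> x; apply: continuousM; exact: coord_continuous.
Qed.

End DotProduct.

Section CoordinateSubspaces.
Variables (R : realType) (n : nat).
Implicit Types (S T : {set 'I_n}) (x y v w : 'rV[R]_n).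

Definition coordmx S : 'M[R]_n := diag_mx (\row_c (c \in S)%:R).

Lemma coordmxE x S r : (x *m coordmx S) 0 r = (r \in S)%:R * x 0 r.
Proof. by rewrite mul_mx_diag !mxE mulrC. Qed.

Lemma tr_coordmx S : (coordmx S)^T = coordmx S.
Proof. exact: tr_diag_mx. Qed.

Lemma coordmxT : coordmx [set: 'I_n]%SET = 1%:M.
Proof. by apply/matrixP => r c; rewrite !mxE inE. Qed.

Lemma sub_coordmxP v S : reflect (forall r, r \notin S -> v 0 r = 0) (v <= coordmx S)%MS.
Proof.
apply: (iffP idP) => [/submxP [w ->] r rS | v0].
  by rewrite coordmxE (negbTE rS) mul0r.
suff -> : v = v *m coordmx S by exact: submxMl.
apply/rowP => r; rewrite coordmxE.
by case: (boolP (r \in S)) => rS; rewrite ?mul1r // v0 ?mulr0.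
Qed.

Lemma mul_coordmxC_eq0 w S : (w *m coordmx (~: S) == 0) = (w <= coordmx S)%MS.
Proof.
apply/eqP/sub_coordmxP => [w0 r rS | w0].
  by have := congr1 (fun u : 'rV[R]_n => u 0 r) w0; rewrite coordmxE inE rS mul1r mxE.
apply/rowP => r; rewrite coordmxE inE mxE.
by case: (boolP (r \in S)) => rS /=; rewrite ?mul0r // w0 // mulr0.
Qed.

Lemma delta_sub_coordmx S s : s \in S -> (('e_s : 'rV[R]_n) <= coordmx S)%MS.
Proof.
move=> sS; apply/sub_coordmxP => r rS; rewrite mxE.
by case: (r =P s) => [rs|]; [move: rS; rewrite rs sS | rewrite andbF].
Qed.

Lemma coordmxS S T : S \subset T -> (coordmx S <= coordmx T)%MS.
Proof.
move=> ST; apply/row_subP => r; apply/sub_coordmxP => c cT; rewrite !mxE.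
case: (r =P c) => [rc|]; last by rewrite mulr0n.
have /negbTE -> : r \notin S by apply: contra cT; rewrite -rc => /(fintype.subsetP ST).
by rewrite mul0rn.
Qed.

Lemma dotv_coordmx x S :
  dotv (x *m coordmx S) (x *m coordmx S) = \sum_(r in S) x 0 r ^+ 2.
Proof.
rewrite dotv_sqr [RHS]big_mkcond; apply: eq_bigr => r _; rewrite coordmxE.
by case: (r \in S); rewrite ?mul1r // mul0r expr0n.
Qed.

Lemma dotv_coordmx_le x S : dotv (x *m coordmx S) (x *m coordmx S) <= dotv x x.
Proof.
rewrite dotv_coordmx dotv_sqr [leRHS](bigID (mem S)) /= lerDl.
by apply: sumr_ge0 => r _; exact: sqr_ge0.
Qed.

Lemma mxrank_coordmx_le S : (\rank (coordmx S) <= #|S|)%N.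
Proof.
rewrite /coordmx diag_mx_sum_delta -sum1_card [X in (_ <= X)%N]big_mkcond /=.
apply: (big_ind2 (fun (A : 'M[R]_n) m => \rank A <= m)%N) => [|A a B b|c _].
- by rewrite mxrank0.
- by move=> rA rB; apply: leq_trans (mxrank_add _ _) (leq_add rA rB).
- by rewrite mxE; case: (c \in S); rewrite ?scale1r ?mxrank_delta // scale0r mxrank0.
Qed.

Lemma mxrank_coordmx S : \rank (coordmx S) = #|S|.
Proof.
have : coordmx S + coordmx (~: S) = 1%:M.
  apply/matrixP => r c; rewrite !mxE inE.
  by case: (r \in S); case: (r == c); rewrite /= ?mulr1n ?mulr0n ?addr0 ?add0r.
move=> /(congr1 mxrank); rewrite mxrank1 => rk_sum.
have := mxrank_add (coordmx S) (coordmx (~: S)); rewrite rk_sum.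
have := mxrank_coordmx_le S; have := mxrank_coordmx_le (~: S).
have := cardsC S; rewrite card_ord; lia.
Qed.

(* [collect S s x] moves the whole mass of [x] on the coordinates in [S] to
   the coordinate [s]; it only depends on [|x|] and on [x] off [S]. *)
Definition collect S (s : 'I_n) x : 'rV[R]_n :=
  x *m coordmx (~: S) + Num.sqrt (dotv x x -
    dotv (x *m coordmx (~: S)) (x *m coordmx (~: S))) *: 'e_s.

Lemma collect_sub S s x : s \in S -> (collect S s x - x <= coordmx S)%MS.
Proof.
move=> sS; apply/sub_coordmxP => r rS; rewrite /collect !(coordmxE, mxE) inE rS.
have -> : (r == s) = false by apply: contraNF rS => /eqP ->.
by rewrite andbF mulr0 mul1r addr0 subrr.
Qed.

Lemma dotv_collect S s x : s \in S -> dotv (collect S s x) (collect S s x) = dotv x x.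
Proof.
move=> sS; rewrite /collect dotvD_delta; last by rewrite coordmxE inE sS mul0r.
by rewrite sqr_sqrtr ?subr_ge0 ?dotv_coordmx_le // addrC subrK.
Qed.

Lemma collectU S T s x : s \in S -> s \in T ->
  collect T s (collect S s x) = collect (S :|: T) s x.
Proof.
move=> sS sT; have offT : collect S s x *m coordmx (~: T) = x *m coordmx (~: (S :|: T)).
  apply/rowP => r; rewrite /collect !(coordmxE, mxE) !inE.
  case: (boolP (r \in T)) => rT; first by rewrite orbT !mul0r.
  have -> : (r == s) = false by apply: contraNF rT => /eqP ->.
  by rewrite orbF andbF mulr0 addr0 mul1r.
by rewrite {1}/collect offT dotv_collect.
Qed.

End CoordinateSubspaces.
Arguments coordmx {R n} S.

(* [move_closed 1%:M E] says that [E] is a union of spheres centred at 0. *)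
Definition move_closed (R : realType) (n : nat) (V : 'M[R]_n) (E : set 'rV[R]_n) : Prop :=
  forall x y, E x -> dotv y y = dotv x x -> (y - x <= V)%MS -> E y.

Section MoveClosed.
Variables (R : realType) (n : nat) (E : set 'rV[R]_n).
Implicit Types (S T : {set 'I_n}) (V W : 'M[R]_n).

Lemma move_closedP V x y : move_closed V E ->
  dotv y y = dotv x x -> (y - x <= V)%MS -> E x <-> E y.
Proof.
move=> mcE yx xyV; split=> [Ex|Ey]; first exact: mcE Ex yx xyV.
by apply: mcE Ey (esym yx) _; rewrite -opprB eqmx_opp.
Qed.

Lemma move_closedS V W : (V <= W)%MS -> move_closed W E -> move_closed V E.
Proof. by move=> VW mcE x y Ex yx /submx_trans /(_ VW); exact: mcE. Qed.

Lemma move_closed_collect S s : s \in S ->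
  move_closed (coordmx S) E <-> (forall x, E x <-> E (collect S s x)).
Proof.
move=> sS; split=> [mcE x | Ecollect x y Ex yx /sub_coordmxP yxS].
  exact: move_closedP mcE (dotv_collect _ sS) (collect_sub _ sS).
have offS : y *m coordmx (~: S) = x *m coordmx (~: S).
  apply/rowP => r; rewrite !coordmxE inE.
  case: (boolP (r \in S)) => rS; first by rewrite !mul0r.
  by move/(_ r rS)/eqP: yxS; rewrite !mxE subr_eq0 => /eqP ->.
apply/(Ecollect y); rewrite /collect offS yx; exact/(Ecollect x).
Qed.

Lemma move_closedU S T s : s \in S -> s \in T ->
  move_closed (coordmx S) E -> move_closed (coordmx T) E ->
  move_closed (coordmx (S :|: T)) E.
Proof.
move=> sS sT /(move_closed_collect sS) mcS /(move_closed_collect sT) mcT.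
apply/(move_closed_collect (s := s)); first by rewrite inE sS.
by move=> x; rewrite mcS mcT collectU.
Qed.

Lemma move_closed_bigcup (I : finType) (P : pred I) S0 (F : I -> {set 'I_n}) s :
  s \in S0 -> move_closed (coordmx S0) E ->
  (forall j, P j -> move_closed (coordmx (S0 :|: F j)) E) ->
  move_closed (coordmx (S0 :|: \bigcup_(j | P j) F j)) E.
Proof.
move=> sS0 mcS0 mcF.
apply: (big_ind (fun X => move_closed (coordmx (S0 :|: X)) E)) => //.
  by rewrite finset.setU0.
move=> X Y mcX mcY; rewrite -{1}(finset.setUid S0) finset.setUACA.
by apply: (move_closedU (s := s)) mcX mcY; rewrite finset.in_setU sS0.
Qed.

End MoveClosed.

Section ThreeCoordinates.
Variables (R : realType) (n : nat) (E : set 'rV[R]_n) (V : 'M[R]_n) (a b c : 'I_n).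
Hypotheses (ab : a != b) (ac : a != c) (bc : b != c).
Hypotheses (abV : ((('e_a + 'e_b)%R : 'rV[R]_n) <= V)%MS) (cV : (('e_c : 'rV[R]_n) <= V)%MS).
Hypotheses (mc_a : move_closed (coordmx [set a]) E) (mcV : move_closed V E).

Section Slice.
Variable u : 'rV[R]_n.
Hypotheses (ua : u 0 a = 0) (ub : u 0 b = 0) (uc : u 0 c = 0).

Let pt al be ga : 'rV[R]_n := u + al *: 'e_a + be *: 'e_b + ga *: 'e_c.

Lemma dotv_slice al be ga :
  dotv (pt al be ga) (pt al be ga) = dotv u u + (al ^+ 2 + be ^+ 2 + ga ^+ 2).
Proof.
rewrite /pt !dotvD_delta ?addrA //.
- by rewrite !mxE ub (eq_sym b) (negbTE ab) !andbF !mulr0 !addr0.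
- by rewrite !mxE uc (eq_sym c) (negbTE ac) (eq_sym c) (negbTE bc) !andbF !mulr0 !addr0.
Qed.

Let move_diag al be ga al' be' ga' : al' - al = be' - be ->
  al' ^+ 2 + be' ^+ 2 + ga' ^+ 2 = al ^+ 2 + be ^+ 2 + ga ^+ 2 ->
  E (pt al be ga) <-> E (pt al' be' ga').
Proof.
move=> d_ab d_sq; apply: (move_closedP mcV); first by rewrite !dotv_slice d_sq.
have -> : pt al' be' ga' - pt al be ga = (al' - al) *: ('e_a + 'e_b) + (ga' - ga) *: 'e_c.
  have -> : be' = be + (al' - al) by rewrite d_ab addrC subrK.
  by apply/rowP => r; rewrite !mxE; ring.
by apply: addmx_sub; apply: scalemx_sub.
Qed.

Let move_flip al be ga : E (pt al be ga) <-> E (pt (- al) be ga).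
Proof.
apply: (move_closedP mc_a); first by rewrite !dotv_slice sqrrN.
have -> : pt (- al) be ga - pt al be ga = (- (2 * al)) *: 'e_a.
  by apply/rowP => r; rewrite !mxE; ring.
by apply: scalemx_sub; apply: delta_sub_coordmx; rewrite inE.
Qed.

Let move_antidiag al be ga al' be' ga' : al' - al = be - be' ->
  al' ^+ 2 + be' ^+ 2 + ga' ^+ 2 = al ^+ 2 + be ^+ 2 + ga ^+ 2 ->
  E (pt al be ga) <-> E (pt al' be' ga').
Proof.
move=> d_ab d_sq; rewrite move_flip [X in _ <-> X]move_flip.
by apply: move_diag; rewrite ?sqrrN //; lra.
Qed.

(* Three moves, making [al + be = 0], then [al - be = r], then [be = ga = 0]. *)
Lemma move_closed_slice al be ga :
  E (pt al be ga) <-> E (pt (Num.sqrt (al ^+ 2 + be ^+ 2 + ga ^+ 2)) 0 0).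
Proof.
set r := Num.sqrt _; have r_sq : r ^+ 2 = al ^+ 2 + be ^+ 2 + ga ^+ 2.
  by rewrite sqr_sqrtr // !addr_ge0 // sqr_ge0.
set s1 := Num.sqrt ((al + be) ^+ 2 / 2 + ga ^+ 2).
have s1_sq : s1 ^+ 2 = (al + be) ^+ 2 / 2 + ga ^+ 2.
  by rewrite sqr_sqrtr // addr_ge0 ?divr_ge0 // sqr_ge0.
set s2 := Num.sqrt (r ^+ 2 / 2).
have s2_sq : s2 ^+ 2 = r ^+ 2 / 2 by rewrite sqr_sqrtr // divr_ge0 // sqr_ge0.
rewrite (@move_diag _ _ _ ((al - be) / 2) ((be - al) / 2) s1); last 2 first.
- by field.
- by rewrite s1_sq; field.
rewrite (@move_antidiag _ _ _ (r / 2) (- (r / 2)) s2); last 2 first.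
- by field.
- have -> : (r / 2) ^+ 2 + (- (r / 2)) ^+ 2 + s2 ^+ 2 = r ^+ 2 by rewrite s2_sq; field.
  by rewrite r_sq s1_sq; field.
by apply: move_diag; [field | rewrite s2_sq; field].
Qed.

End Slice.

Lemma move_closed3 : move_closed (coordmx [set a; b; c]) E.
Proof.
have aU : a \in [set a; b; c] by rewrite !inE eqxx.
apply/(move_closed_collect E aU) => x; rewrite /collect.
set u := x *m coordmx (~: [set a; b; c]).
have [ua ub uc] : [/\ u 0 a = 0, u 0 b = 0 & u 0 c = 0].
  by split; rewrite /u coordmxE !inE ?eqxx ?orbT mul0r.
have xE : x = u + x 0 a *: 'e_a + x 0 b *: 'e_b + x 0 c *: 'e_c.
  apply/rowP => r; rewrite /u !(coordmxE, mxE) !inE.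
  have [->|_] := eqVneq r a; first by rewrite eqxx (negbTE ab) (negbTE ac) /=; ring.
  have [->|_] := eqVneq r b; first by rewrite eqxx (negbTE bc) /=; ring.
  by have [->|_] := eqVneq r c; rewrite ?eqxx /=; ring.
have -> : dotv x x - dotv u u = x 0 a ^+ 2 + x 0 b ^+ 2 + x 0 c ^+ 2.
  by rewrite {1 2}xE dotv_slice //; ring.
by rewrite {1}xE move_closed_slice // !scale0r !addr0.
Qed.

End ThreeCoordinates.

Section OrthogonalComplement.
Variables (R : realType) (n : nat).
Implicit Types (H : 'M[R]_n) (x y v w h : 'rV[R]_n).

Lemma dotv_orthc H h v : (h <= H)%MS -> (v <= orthc H)%MS -> dotv h v = 0.
Proof.
move=> /submxP [D ->]; rewrite /orthc sub_kermx => /eqP vH.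
by rewrite /dotv -mulmxA -[H]trmxK -trmx_mul vH trmx0 mulmx0 mxE.
Qed.

Lemma orthc_decomp H x : exists2 c, (c <= H)%MS & (x - c <= orthc H)%MS.
Proof.
have cap0 : (H :&: orthc H)%MS = 0.
  apply/row_matrixP => r; rewrite row0; apply/eqP; rewrite -dotv_eq0.
  apply/eqP/dotv_orthc; apply: submx_trans (row_sub r _) _.
    exact: capmxSl.
  exact: capmxSr.
have : (x <= H + orthc H)%MS.
  apply: submx_trans (submx1 x) _; rewrite sub1mx /row_full eqn_leq rank_leq_col /=.
  have := mxrank_sum_cap H (orthc H); rewrite cap0 mxrank0 addn0 => ->.
  by rewrite /orthc mxrank_ker mxrank_tr subnKC // rank_leq_col.
case/sub_addsmxP => -[u w] /= ->; exists (u *m H); first exact: submxMl.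
by rewrite addrC addKr submxMl.
Qed.

Definition householder v : 'M[R]_n := 1%:M - (2 / dotv v v) *: (v^T *m v).

Lemma mul_householder h v : h *m householder v = h - (2 / dotv v v * dotv h v) *: v.
Proof.
rewrite /householder mulmxBr mulmx1 -scalemxAr mulmxA (mx11_scalar (h *m v^T)).
by rewrite mul_scalar_mx scalerA.
Qed.

Lemma tr_householder v : (householder v)^T = householder v.
Proof. by rewrite /householder linearB /= trmx1 linearZ /= trmx_mul trmxK. Qed.

Lemma householder_fix h v : dotv h v = 0 -> h *m householder v = h.
Proof. by move=> hv; rewrite mul_householder hv mulr0 scale0r subr0. Qed.

Lemma householderK v : v != 0 -> householder v *m householder v = 1%:M.
Proof.
rewrite -dotv_eq0 => vv; apply/row_matrixP => r.
rewrite -[householder v *m _]mul1mx row_mul mulmxA !mul_householder.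
rewrite dotvBl dotvZl -addrA -opprD -scalerDl.
set h := row r 1%:M; suff -> : 2 / dotv v v * dotv h v +
    2 / dotv v v * (dotv h v - 2 / dotv v v * dotv h v * dotv v v) = 0.
  by rewrite scale0r subr0.
by field.
Qed.

Lemma det_householder v : v != 0 -> \det (householder v) = -1.
Proof.
rewrite -dotv_eq0 => vv.
have -> : householder v = 1%:M - ((2 / dotv v v) *: v)^T *m v.
  rewrite /householder scalemxAl; congr (_ - _ *m _).
  by apply/matrixP => i j; rewrite !mxE.
by rewrite det1Bmul linearZ /= -scalemxAr mxE -/(dotv v v) divfK //; lra.
Qed.

Lemma householder_swap x y : dotv x x = dotv y y -> x != y ->
  x *m householder (x - y) = y.
Proof.
move=> xy /negPf; rewrite -subr_eq0 -dotv_eq0 => /negbT nz.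
rewrite mul_householder.
have -> : 2 / dotv (x - y) (x - y) * dotv x (x - y) = 1.
  have dxy : dotv (x - y) (x - y) = 2 * dotv x (x - y).
    by rewrite !dotvBl !dotvBr (dotvC y x) -xy; ring.
  have dx0 : dotv x (x - y) != 0.
    by apply: contra nz; rewrite dxy => /eqP ->; rewrite mulr0.
  by rewrite dxy; field.
by rewrite scale1r opprB addrC subrK.
Qed.

Lemma rotation_fixing_move H x y : (\rank H + 2 <= n)%N ->
  dotv y y = dotv x x -> (y - x <= orthc H)%MS ->
  exists2 Q, rotation_fixing H Q & x *m Q = y.
Proof.
move=> rkH yx yxH; have [<-|xy] := eqVneq x y.
  exists 1%:M; last exact: mulmx1.
  by split; [rewrite trmx1 mulmx1 | exact: det1 | move=> z _; rewrite mulmx1].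
pose w := nz_row (kermx (col_mx H y)^T).
have w_nz : w != 0.
  rewrite nz_row_eq0 -mxrank_eq0 mxrank_ker mxrank_tr -lt0n subn_gt0.
  have := leq_of_leqif (mxrank_adds_leqif H y); rewrite addsmxE => rk.
  by apply: leq_ltn_trans rk _; have := rank_leq_row y; lia.
have : w *m (col_mx H y)^T = 0 by apply/eqP; rewrite -sub_kermx nz_row_sub.
rewrite tr_col_mx mul_mx_row -row_mx0 => /eq_row_mx [wH wy].
have hw h : (h <= H)%MS -> dotv h w = 0.
  by move=> hH; apply: dotv_orthc hH _; rewrite /orthc sub_kermx wH.
have hxy h : (h <= H)%MS -> dotv h (x - y) = 0.
  by move=> hH; apply: dotv_orthc hH _; rewrite -opprB eqmx_opp.
exists (householder (x - y) *m householder w).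
  split; last by move=> h hH; rewrite mulmxA !householder_fix ?hw ?hxy.
  - rewrite trmx_mul !tr_householder mulmxA -(mulmxA (householder (x - y))).
    by rewrite householderK // mulmx1 householderK ?subr_eq0.
  - by rewrite det_mulmx !det_householder ?subr_eq0 // mulrNN mulr1.
rewrite mulmxA (householder_swap (esym yx) xy) householder_fix //.
by rewrite dotvC /dotv wy mxE.
Qed.
End OrthogonalComplement.

Lemma orth_sub_sym (R : realType) (n : nat) (A B : 'M[R]_n) : orth_sub A B -> orth_sub B A.
Proof. by move=> AB x y xB yA; rewrite dotvC AB. Qed.

Section InvariantSets.
Variables (R : realType) (n : nat) (H : 'M[R]_n).
Local Open Scope classical_set_scope.

Lemma move_closed_rotation_invariant (E : set 'rV[R]_n) : (\rank H + 2 <= n)%N ->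
  (forall Q x, rotation_fixing H Q -> E x -> E (x *m Q)) -> move_closed (orthc H) E.
Proof.
move=> rkH invE x y Ex yx yxH.
by have [Q HQ <-] := rotation_fixing_move rkH yx yxH; exact: invE.
Qed.

Lemma move_closed_rot_symmetric (X : set 'rV[R]_n) :
  rot_symmetric H X -> move_closed (orthc H) X.
Proof.
move=> symX x y Xx yx yxH; have [c cH xcH] := orthc_decomp H x.
have ycH : (y - c <= orthc H)%MS by rewrite -(subrKA x); exact: addmx_sub.
have pyth z : (z - c <= orthc H)%MS -> dotv (z - c) (z - c) = dotv z z - dotv c c.
  move=> /(dotv_orthc cH); rewrite dotvBr => czc.
  by rewrite dotvBl !dotvBr (dotvC z c); lra.
have [Rd [_ XH]] := symX c cH.
have : (X `&` [set z | (z - c <= orthc H)%MS]) x by [].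
rewrite XH => -[r Rdr [_ xr]].
have : (\bigcup_(r in Rd) ([set z | (z - c <= orthc H)%MS] `&` sphere c r)) y.
  by exists r => //; split => //; rewrite /sphere /= -xr; apply/eq_enorm; rewrite !pyth // yx.
by rewrite -XH => -[].
Qed.

End InvariantSets.

Section IsotropicConvexSets.
Variables (R : realType) (n : nat) (K : set 'rV[R]_n).
Hypotheses (convK : convex_set_rV K) (isoK : move_closed 1%:M K).

Lemma isotropic_convex0 x : K x -> K 0.
Proof.
move=> Kx; have Knx : K (- x).
  by apply: isoK Kx _ (submx1 _); rewrite -scaleN1r dotvZl dotvZr; ring.
have := convK (t := 1 / 2) _ _ Kx Knx.
have -> : (1 / 2 : R) *: x + (1 - 1 / 2) *: - x = 0.
  by rewrite scalerN (_ : 1 - 1 / 2 = 1 / 2 :> R) ?subrr //; field.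
by apply; lra.
Qed.

Lemma isotropic_convex_le x y : K x -> dotv y y <= dotv x x -> K y.
Proof.
move=> Kx yx; have K0 := isotropic_convex0 Kx.
have [xx0|xn0] := eqVneq (dotv x x) 0.
  apply: isoK K0 _ (submx1 _); have /eqP -> : dotv (0 : 'rV[R]_n) 0 == 0 by rewrite dotv_eq0.
  by apply/eqP; rewrite eq_le dotv_ge0 andbT -xx0.
have xpos : 0 < dotv x x by rewrite lt_neqAle eq_sym xn0 dotv_ge0.
pose t := Num.sqrt (dotv y y / dotv x x).
have t_ge0 : 0 <= t := sqrtr_ge0 _.
have t_le1 : t <= 1 by rewrite -sqrtr1 ler_wsqrtr // ler_pdivrMr // mul1r.
have := convK t_ge0 t_le1 Kx K0; rewrite scaler0 addr0 => Ktx.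
apply: isoK Ktx _ (submx1 _); rewrite dotvZl dotvZr mulrA -expr2 sqr_sqrtr.
  by field; rewrite gt_eqF.
by rewrite divr_ge0 ?dotv_ge0 // ltW.
Qed.

End IsotropicConvexSets.

Lemma isotropic_convex_body_ball (R : realType) (n : nat) (K : set 'rV[R]_n.+1) :
  convex_body K -> move_closed 1%:M K ->
  exists r : R, 0 < r /\ K = [set x | enorm x <= r]%classic.
Proof.
move=> [cK convK [x0 intx0]] isoK; have Kx0 : K x0 := nbhs_singleton intx0.
have [xm /set_mem Kxm xm_max] := compact_EVT_max (ex_intro _ x0 Kx0) cK
  (continuous_subspaceT (@continuous_dotv R n.+1)).
exists (enorm xm); split; last first.
  apply/seteqP; split => y /=; first by move=> Ky; exact/ler_wsqrtr/xm_max/mem_set.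
  by rewrite ler_sqrt ?dotv_ge0 // => yxm; exact: isotropic_convex_le Kxm yxm.
rewrite lt_neqAle sqrtr_ge0 andbT eq_sym; apply/negP; rewrite sqrtr_eq0 => xm0.
have K_eq0 x : K x -> x = 0.
  move=> Kx; apply/eqP; rewrite -dotv_eq0 eq_le dotv_ge0 andbT.
  exact: le_trans (xm_max _ (mem_set Kx)) xm0.
(* A neighbourhood of [x0 = 0] contains a segment of the first coordinate axis. *)
have : nbhs ((0 : R) *: ('e_0 : 'rV[R]_n.+1)) K by rewrite scale0r -(K_eq0 _ Kx0).
move=> /(@scalel_continuous R _ ('e_0 : 'rV[R]_n.+1) 0) [eps eps_gt0 epsK].
have {}eps_gt0 : 0 < eps := eps_gt0.
have /K_eq0/eqP : K ((eps / 2) *: 'e_0).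
  apply: epsK; rewrite /ball_ /= sub0r normrN ger0_norm; lra.
rewrite scaler_eq0 => /orP [/eqP|/eqP/rowP/(_ 0)]; first lra.
by rewrite !mxE eqxx => /eqP; rewrite oner_eq0.
Qed.

Section Construction.
Variables (R : realType) (m i : nat).
Hypotheses (i_ge1 : (1 <= i)%N) (i_le : (i <= m.+1 - 2)%N).
Local Notation n := m.+1.
Local Notation d := (n - i)%N.
Local Notation k := (ceil_div n d).

(* Blocks of [d] consecutive coordinates, [block 0] starting at 0 and the last
   one ending at [n - 1].  [H_0^perp] is the coordinate subspace of [block 0];
   for [j > 0], [H_j^perp] is spanned by [e_0 + e_(tied j)] and the [e_r] with
   [r] in [block j], [r != tied j]. *)
Definition block_start (j : nat) : nat := minn (j * d) i.
Definition block (j : nat) : {set 'I_n} :=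
  [set r : 'I_n | block_start j <= r < block_start j + d]%N.
Definition tied (j : nat) : 'I_n := inord (block_start j + d.-1).
Definition tie (j : nat) : 'M[R]_n := (0 < j)%N%:R *: delta_mx ord0 (tied j).
Definition Hsub (j : nat) : 'M[R]_n := coordmx (~: block j) *m (1%:M - tie j).

Lemma d_ge2 : (2 <= d)%N. Proof. lia. Qed.

Lemma block_start_le j : (block_start j <= i)%N. Proof. rewrite /block_start; lia. Qed.

Lemma tiedE j : tied j = (block_start j + d.-1)%N :> nat.
Proof. by rewrite /tied inordK //; have := block_start_le j; lia. Qed.

Lemma tied_block j : tied j \in block j.
Proof. by rewrite inE tiedE; have := d_ge2; lia. Qed.

Lemma ord0_block0 : ord0 \in block 0.
Proof. by rewrite inE /block_start mul0n min0n /=; have := d_ge2; lia. Qed.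

Lemma ord0_notin_block j : (0 < j)%N -> ord0 \notin block j.
Proof. by move=> j_gt0; rewrite inE /block_start /=; have := d_ge2; nia. Qed.

Lemma tied_neq0 j : (0 < j)%N -> tied j != ord0.
Proof. by move=> /ord0_notin_block; apply: contraNneq => <-; exact: tied_block. Qed.

Lemma block_untied j : exists2 c, c \in block j & c != tied j.
Proof.
have lt_n : (block_start j < n)%N by have := block_start_le j; lia.
exists (Ordinal lt_n); first by rewrite inE /=; have := d_ge2; lia.
by apply/eqP => /(congr1 val); rewrite /= tiedE; have := d_ge2; lia.
Qed.

Lemma k_gt0 : (0 < k)%N.
Proof. by rewrite /ceil_div divn_gt0; have := d_ge2; lia. Qed.

Lemma block_cover (r : 'I_n) : r \notin block 0 -> exists2 j : 'I_k, (0 < j)%N & r \in block j.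
Proof.
rewrite inE /block_start mul0n min0n /= -leqNgt => d_le_r.
have d_gt0 : (0 < d)%N by have := d_ge2; lia.
have k_eq : k = (m %/ d).+1.
  rewrite /ceil_div; have -> : (n + d.-1 = m + d)%N by lia.
  by rewrite divnDr // divnn d_gt0 addn1.
have j_lt : (r %/ d < k)%N.
  by rewrite k_eq ltnS; apply: leq_div2r; rewrite -ltnS.
exists (Ordinal j_lt); first by rewrite /= divn_gt0.
rewrite inE /block_start /=.
have := leq_trunc_div r d; have := ltn_ceil r d_gt0; rewrite mulSn.
have := ltn_ord r; lia.
Qed.

Lemma card_block j : #|block j| = d.
Proof.
have le := block_start_le j.
have -> : block j = [set inord (block_start j + t) | t : 'I_d].
  apply/setP => r; rewrite inE; apply/idP/imsetP => [r_in|[t _ ->]].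
    have t_lt : (r - block_start j < d)%N by lia.
    by exists (Ordinal t_lt) => //; apply/val_inj; rewrite /= inordK; lia.
  by rewrite inordK; have := ltn_ord t; lia.
rewrite card_imset ?card_ord // => t t' /(congr1 val) /=.
have [lt lt'] : (block_start j + t < n)%N /\ (block_start j + t' < n)%N.
  by have := ltn_ord t; have := ltn_ord t'; lia.
by rewrite !inordK // => /addnI /val_inj.
Qed.

Lemma tie_sqr j : tie j *m tie j = 0.
Proof.
rewrite /tie -scalemxAl -scalemxAr mul_delta_mx_cond.
case: j => [|j]; first by rewrite /= mulr0n !scale0r.
by rewrite (negbTE (tied_neq0 _)) // mulr0n !scaler0.
Qed.

Lemma mxrank_Hsub j : \rank (Hsub j) = i.
Proof.
have unit_tie : 1%:M - tie j \in unitmx.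
  apply: (proj1 (@mulmx1_unit _ _ _ (1%:M + tie j) _)).
  by rewrite mulmxDr mulmx1 mulmxBl mul1mx tie_sqr subr0 subrK.
rewrite /Hsub mxrankMfree ?row_free_unit // mxrank_coordmx.
by have := cardsC (block j); rewrite card_block card_ord; lia.
Qed.

Lemma sub_orthc_Hsub j (v : 'rV[R]_n) : (v <= orthc (Hsub j))%MS =
  (v - ((0 < j)%N%:R * v 0 (tied j)) *: 'e_ord0 <= coordmx (block j))%MS.
Proof.
rewrite /orthc sub_kermx /Hsub trmx_mul tr_coordmx mulmxA mul_coordmxC_eq0.
rewrite linearB /= trmx1 mulmxBr mulmx1 /tie linearZ /= trmx_delta.
by rewrite -scalemxAr mulmx_delta scalerA.
Qed.

Lemma coordmx_block0 : (coordmx (block 0) <= orthc (Hsub 0))%MS.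
Proof.
apply/row_subP => r; rewrite sub_orthc_Hsub /= mulr0n mul0r scale0r subr0.
exact: row_sub.
Qed.

Lemma delta_sub_orthc_Hsub j r : r \in block j -> r != tied j ->
  (('e_r : 'rV[R]_n) <= orthc (Hsub j))%MS.
Proof.
move=> rj rb; rewrite sub_orthc_Hsub mxE eq_sym (negbTE rb) andbF mulr0 scale0r subr0.
exact: delta_sub_coordmx.
Qed.

Lemma tied_sub_orthc_Hsub j : (0 < j)%N ->
  ((('e_ord0 + 'e_(tied j))%R : 'rV[R]_n) <= orthc (Hsub j))%MS.
Proof.
move=> j_gt0; rewrite sub_orthc_Hsub j_gt0 !mxE !eqxx (negbTE (tied_neq0 j_gt0)) /=.
by rewrite add0r !mul1r scale1r addrAC subrr add0r delta_sub_coordmx ?tied_block.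
Qed.

Lemma move_closed_Hsub (E : set 'rV[R]_n) :
  (forall j : 'I_k, move_closed (orthc (Hsub j)) E) -> move_closed 1%:M E.
Proof.
move=> mcE; pose j0 : 'I_k := Ordinal k_gt0.
have mc0 : move_closed (coordmx (block 0)) E := move_closedS coordmx_block0 (mcE j0).
pose P (jc : 'I_k * 'I_n) := [&& 0 < jc.1, jc.2 \in block jc.1 & jc.2 != tied jc.1]%N.
pose F (jc : 'I_k * 'I_n) := [set ord0; tied jc.1; jc.2].
have mcF jc : P jc -> move_closed (coordmx (block 0 :|: F jc)) E.
  case: jc => j c /and3P [/= j_gt0 cj cb].
  apply: (move_closedU ord0_block0 _ (mc0)); first by rewrite !inE eqxx.
  have c0 : ord0 != c by apply: contraNneq (ord0_notin_block j_gt0) => ->.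
  apply: (move_closed3 _ _ _ (tied_sub_orthc_Hsub j_gt0) (delta_sub_orthc_Hsub cj cb)
                       _ (mcE j)).
  - by rewrite eq_sym tied_neq0.
  - exact: c0.
  - by rewrite eq_sym.
  - by apply: move_closedS mc0; apply: coordmxS; rewrite finset.sub1set ord0_block0.
have := move_closed_bigcup ord0_block0 mc0 mcF.
suff -> : block 0 :|: \bigcup_(jc | P jc) F jc = [set: 'I_n] by rewrite coordmxT.
apply/setP => r; rewrite finset.in_setT finset.in_setU.
case: (boolP (r \in block 0)) => //= r0.
have [j j_gt0 rj] := block_cover r0; apply/finset.bigcupP.
have [->|rb] := eqVneq r (tied j).
  have [c cj cb] := block_untied j; exists (j, c); first by rewrite /P /= j_gt0 cj cb.
  by rewrite !inE eqxx orbT.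
by exists (j, r); rewrite /P /= ?j_gt0 ?rj ?rb // !inE eqxx !orbT.
Qed.

Lemma sumsmx_orthc_Hsub : (\sum_(j < k) orthc (Hsub j) == 1%:M)%MS.
Proof.
set S := (\sum_(j < k) orthc (Hsub j))%MS; pose j0 : 'I_k := Ordinal k_gt0.
(* The row space of [S] is closed under moves, so it contains every unit vector. *)
have mcS : move_closed 1%:M (fun x => (x <= S)%MS).
  apply: move_closed_Hsub => j x y xS _ yxH; rewrite -(subrK x y) addmx_sub //.
  exact: (sumsmx_sup j).
have e0S : (('e_ord0 : 'rV[R]_n) <= S)%MS.
  apply: (sumsmx_sup j0) => //; apply: submx_trans coordmx_block0.
  exact: delta_sub_coordmx ord0_block0.
apply/andP; split; first exact: submx1.
apply/row_subP => r; rewrite row1; apply: mcS e0S _ (submx1 _).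
by rewrite !dotv_delta !mxE !eqxx.
Qed.

Lemma orthc_Hsub0_not_orth j : (0 < j)%N -> ~ orth_sub (orthc (Hsub 0)) (orthc (Hsub j)).
Proof.
move=> j_gt0 orth0j.
have e0_in : (('e_ord0 : 'rV[R]_n) <= orthc (Hsub 0))%MS.
  by apply: submx_trans coordmx_block0; exact: delta_sub_coordmx ord0_block0.
have /eqP := orth0j _ _ e0_in (tied_sub_orthc_Hsub j_gt0).
by rewrite dotvDr !dotv_delta !mxE !eqxx (negbTE (tied_neq0 j_gt0)) addr0 oner_eq0.
Qed.

Lemma orthc_Hsub_indecomposable : ~ (exists S : {set 'I_k},
  [/\ exists a, a \in S, exists b, b \notin S &
      forall a b, a \in S -> b \notin S -> orth_sub (orthc (Hsub a)) (orthc (Hsub b))]).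
Proof.
case=> S [[a aS] [b bS] orthS]; pose j0 : 'I_k := Ordinal k_gt0.
have pos (j : 'I_k) : j != j0 -> (0 < j)%N.
  by rewrite lt0n; apply: contra => /eqP j0E; apply/eqP/val_inj.
have [j0S|j0S] := boolP (j0 \in S).
  have b_gt0 : (0 < b)%N by apply: pos; apply: contraNneq bS => ->.
  exact: orthc_Hsub0_not_orth b_gt0 (orthS _ _ j0S bS).
have a_gt0 : (0 < a)%N by apply: pos; apply: contraNneq j0S => <-.
exact: orthc_Hsub0_not_orth a_gt0 (orth_sub_sym (orthS _ _ aS j0S)).
Qed.

Local Open Scope classical_set_scope.

Lemma move_closed_sphere_eq (E : set 'rV[R]_n) : E `<=` @usphere R n -> E !=set0 ->
  (forall (j : 'I_k) x y, E x -> @usphere R n y -> (y - x <= orthc (Hsub j))%MS -> E y) ->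
  E = @usphere R n.
Proof.
move=> Esph [x0 Ex0] moveE.
have mcE : move_closed 1%:M E.
  apply: move_closed_Hsub => j x y Ex yx; apply: moveE (Ex) _.
  by have := Esph x Ex; rewrite /usphere /sphere /= !subr0 => <-; apply/eq_enorm.
apply/seteqP; split=> // y ysph; apply: mcE (Ex0) _ (submx1 _); apply/eq_enorm.
by move: ysph (Esph _ Ex0); rewrite /usphere /sphere /= !subr0 => -> ->.
Qed.

Lemma rotation_invariant_spheres (F : set 'rV[R]_n) :
  (forall (j : 'I_k) Q x, rotation_fixing (Hsub j) Q -> F x -> F (x *m Q)) ->
  union_of_origin_spheres F.
Proof.
move=> invF; have mcF : move_closed 1%:M F.
  apply: move_closed_Hsub => j; apply: move_closed_rotation_invariant (invF j).
  by rewrite mxrank_Hsub; lia.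
exists (@enorm R n @` F); split; first by move=> _ [x _ <-]; exact: sqrtr_ge0.
apply/seteqP; split=> [x Fx | y [_ [x Fx <-]]].
  by exists (enorm x) => //; rewrite /sphere /= subr0.
by rewrite /sphere /= subr0 => /eq_enorm yx; exact: mcF Fx yx (submx1 _).
Qed.

Lemma rot_symmetric_ball (K : set 'rV[R]_n) : convex_body K ->
  (forall j : 'I_k, rot_symmetric (Hsub j) K) ->
  exists r : R, 0 < r /\ K = [set x | enorm x <= r].
Proof.
move=> Kbody symK; apply: isotropic_convex_body_ball Kbody _.
by apply: move_closed_Hsub => j; exact: move_closed_rot_symmetric.
Qed.

End Construction.

Local Open Scope classical_set_scope.
Local Open Scope ring_scope.

Theorem corollary4p2 (R : realType) (n i : nat) :
  (1 <= i)%N -> (i <= n - 2)%N ->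
  exists H : 'I_(ceil_div n (n - i)) -> 'M[R]_n,
    [/\ (forall j, \rank (H j) = i),
        (* (i) *)
        ((\sum_j orthc (H j) == 1%:M)%MS /\
         ~ (exists S : {set 'I_(ceil_div n (n - i))},
              [/\ exists a, a \in S, exists b, b \notin S &
                  forall a b, a \in S -> b \notin S ->
                    orth_sub (orthc (H a)) (orthc (H b))])),
        (* (ii) *)
        (forall E : set 'rV[R]_n,
           E `<=` @usphere R n -> E !=set0 -> closed E ->
           (forall j x y, E x -> @usphere R n y ->
              (y - x <= orthc (H j))%MS -> E y) ->
           E = @usphere R n),
        (* (iii) *)
        (forall F : set 'rV[R]_n, closed F ->
           (forall j Q x, rotation_fixing (H j) Q -> F x -> F (x *m Q)) ->
           union_of_origin_spheres F) &
        (* (iv) *)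
        (forall K : set 'rV[R]_n, convex_body K ->
           (forall j, rot_symmetric (H j) K) ->
           exists r : R, 0 < r /\ K = [set x | enorm x <= r])].
Proof.
move=> i_ge1; case: n => [|m] i_le; first by move: i_ge1 i_le; lia.
exists (fun j => Hsub R m i j); split.
- by move=> j; exact: mxrank_Hsub.
- by split; [exact: sumsmx_orthc_Hsub | exact: orthc_Hsub_indecomposable].
- by move=> E Esph E_nz _; exact: move_closed_sphere_eq.
- by move=> F _; exact: rotation_invariant_spheres.
- exact: rot_symmetric_ball.
Qed.
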